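(* Let $A \in \mathbb{R}^{n\times d}$, $b\in\mathbb{R}^n$, and suppose $Ax=b$ admits a solution $x^*$. Let $w$ be a random variable in $\mathbb{R}^n$, $\mathcal{N}(w) = \mathrm{span}\lbrace z \in \mathbb{R}^d : \mathbb{P}[z'A'w=0]=1\rbrace$, $\mathcal{R}(w) = \mathcal{N}(w)^\perp$, and let $\mathcal{V}(w)$ be the subspace with $\mathcal{V}(w)\perp\mathcal{R}(w)$ and $\mathcal{V}(w)\oplus\mathcal{R}(w) = \mathrm{row}(A)$. Let $\lbrace w_\ell:\ell\geq 0\rbrace$ be random variables in $\mathbb{R}^n$ with $\mathbb{P}[A'w_\ell\in\mathcal{R}(w)]=1$ for all $\ell$, let $x_0\in\mathbb{R}^d$ be arbitrary and $x_{k+1} = x_k + A'w_kw_k'(b-Ax_k)/\|A'w_k\|_2^2$. Define stopping times $\tau_0=0$, $\tau_1 = \min\lbrace k\geq0 : \mathrm{span}\lbrace A'w_0,\ldots,A'w_k\rbrace = \mathcal{R}(w)\rbrace$, and for $\ell\geq 2$, $\tau_\ell = \min\lbrace k>\tau_{\ell-1} : \mathrm{span}\lbrace A'w_{\tau_{\ell-1}+1},\ldots,A'w_k\rbrace = \mathcal{R}(w)\rbrace$ if $\tau_{\ell-1}<\infty$, else $\tau_\ell=\infty$. For finite stopping times, let $\mathcal{F}_\ell$ be the set of matrices whose columns form a maximal linearly independent subset of $\lbrace A'w_{\tau_{\ell-1}+1}/\|A'w_{\tau_{\ell-1}+1}\|_2,\ldots,A'w_{\tau_\ell}/\|A'w_{\tau_\ell}\|_2\rbrace$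 and $\gamma_\ell = 1-\min_{F\in\mathcal{F}_\ell}\det(F'F)$. Then, on the events $\bigcap_{\ell=0}^\infty\lbrace\tau_\ell<\infty\rbrace$ and $\lbrace\lim_{\ell\to\infty}\prod_{j=1}^\ell\gamma_j = 0\rbrace$, $\lim_{k\to\infty}Ax_k = b$ if and only if $P_{\mathcal{V}(w)}x_0 = P_{\mathcal{V}(w)}x^*$.
   Context: $P_W$ is orthogonal projection onto $W$; $\mathrm{row}(A)$ is the row space of $A$; $A'$ is the transpose. The iteration presupposes $A'w_k\neq 0$. *)

(* Vectors of R^m are row vectors 'rV[R]_m;
   A' w (a vector of R^d) is rendered as  w *m A  and  A x  as  x *m A^T. *)
From HB Require Import structures.
From mathcomp Require Import all_boot all_order all_algebra.
From mathcomp Require Import all_classical all_reals all_analysis.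
Set Implicit Arguments. Unset Strict Implicit. Unset Printing Implicit Defensive.
Import Order.TTheory GRing.Theory Num.Theory.
Local Open Scope ring_scope.

Section KaczDefs.
Variable R : realType.

Definition dotv m (u v : 'rV[R]_m) : R := (u *m v^T) 0 0.

Definition norm2 m (u : 'rV[R]_m) : R := Num.sqrt (dotv u u).

Fixpoint kacz n d (A : 'M[R]_(n, d)) (b : 'rV[R]_n) (W : nat -> 'rV[R]_n)
  (x0 : 'rV[R]_d) (k : nat) : 'rV[R]_d :=
  match k with
  | 0 => x0
  | k'.+1 =>
      let x := kacz A b W x0 k' in
      let a := W k' *m A in
      x + (dotv (W k') (b - x *m A^T) / dotv a a) *: a
  end.

(* span{A'w_s, ..., A'w_t} as (the row space of) a square matrix *)
Definition spanmx n d (A : 'M[R]_(n, d)) (W : nat -> 'rV[R]_n) (s t : nat) : 'M[R]_d :=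
  (\sum_(s <= j < t.+1) <<W j *m A>>)%MS.

(* span{A'w_s, ..., A'w_t} = R(w), with R(w) the row space of Rm *)
Definition span_ok n d (A : 'M[R]_(n, d)) (W : nat -> 'rV[R]_n) (Rm : 'M[R]_d)
  (s t : nat) : bool := (spanmx A W s t == Rm)%MS.

(* first index of the l-th block (l >= 1 is passed as l.-1 + 1):
   block 1 starts at 0, block l >= 2 starts at tau_{l-1} + 1 *)
Definition blockstart (tau : nat -> nat) (lm1 : nat) : nat :=
  if lm1 is 0 then 0%N else (tau lm1).+1.

(* tau is the (everywhere finite) sequence of stopping times of the path W:
   tau_0 = 0, tau_1 = min {k >= 0 | span{A'w_0..A'w_k} = R(w)},
   tau_l = min {k > tau_{l-1} | span{A'w_{tau_{l-1}+1}..A'w_k} = R(w)}. *)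
Definition is_tau_seq n d (A : 'M[R]_(n, d)) (W : nat -> 'rV[R]_n) (Rm : 'M[R]_d)
  (tau : nat -> nat) : Prop :=
  tau 0%N = 0%N /\
  forall l : nat, let s := blockstart tau l in
    [/\ (s <= tau l.+1)%N, span_ok A W Rm s (tau l.+1) &
        forall k, (s <= k < tau l.+1)%N -> ~~ span_ok A W Rm s k].

Definition unitA n d (A : 'M[R]_(n, d)) (W : nat -> 'rV[R]_n) (j : nat) : 'rV[R]_d :=
  (norm2 (W j *m A))^-1 *: (W j *m A).

(* the matrix whose rows are the vectors u_{s+j}, j in J (i.e. F' in the paper) *)
Definition blockmx n d (A : 'M[R]_(n, d)) (W : nat -> 'rV[R]_n) (s m : nat)
  (J : {set 'I_m}) : 'M[R]_(size (enum J), d) :=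
  \matrix_(i < size (enum J), k < d)
     (unitA A W (s + nth 0%N [seq nat_of_ord j | j <- enum J] i)) 0 k.

Definition maxindep n d (A : 'M[R]_(n, d)) (W : nat -> 'rV[R]_n) (s m : nat)
  (J : {set 'I_m}) : bool :=
  row_free (blockmx A W s J) &&
  [forall j : 'I_m, (j \notin J) ==> ~~ row_free (blockmx A W s (j |: J))].

Definition mingram n d (A : 'M[R]_(n, d)) (W : nat -> 'rV[R]_n) (s t : nat) : R :=
  let vals := [seq \det (blockmx A W s J *m (blockmx A W s J)^T)
              | J <- enum [set J : {set 'I_(t - s).+1} | maxindep A W s J]] in
  foldr Num.min (head 0 vals) vals.

Definition gammaK n d (A : 'M[R]_(n, d)) (W : nat -> 'rV[R]_n) (tau : nat -> nat)
  (l : nat) : R :=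
  1 - mingram A W (blockstart tau l.-1) (tau l).

(* orthogonal projection onto the row space of V:  P = B'(BB')^{-1}B,
   B a basis (row_base) of the row space of V *)
Definition orthproj d (V : 'M[R]_d) (x : 'rV[R]_d) : 'rV[R]_d :=
  let B := row_base V in x *m (B^T *m invmx (B *m B^T) *m B).

End KaczDefs.

From mathcomp Require Import all_boot all_order all_algebra.
From mathcomp Require Import all_classical all_reals all_analysis.
From mathcomp Require Import ring lra.
Import Order.TTheory GRing.Theory Num.Theory numFieldNormedType.Exports.
Set Implicit Arguments. Unset Strict Implicit. Unset Printing Implicit Defensive.
Local Open Scope classical_set_scope.
Local Open Scope ring_scope.

(* Write u_k = A'w_k / |A'w_k| and e_k = x_k - x*.  Since A x* = b, each step is the
   projection e_{k+1} = e_k - <e_k, u_k> u_k.  Every index lies in a block whose vectors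
   span R(w), so every u_k lies in R(w): the V(w)-component of e_k never moves, while
   the R(w)-component y_k = P_R e_k has nonincreasing norm.  Over one block the u_k span
   R(w), and Meany's inequality for products of such projections gives
   |y_{tau_l}|^2 <= gamma_l |y_{tau_{l-1}}|^2; hence y_k -> 0 when the products of the
   gamma_l vanish.  As row(A) = V(w) + R(w), the residual A x_k - b = A e_k then tends
   to A P_V e_0, which vanishes iff P_V e_0 = 0 because P_V e_0 lies in row(A).
   The argument is pathwise. *)

Section DotProduct.
Variables (R : realType) (d : nat).
Implicit Types (u v w x y z : 'rV[R]_d).

Lemma dotvE u v : dotv u v = \sum_k u 0 k * v 0 k.
Proof. by rewrite /dotv mxE; apply: eq_bigr => k _; rewrite mxE. Qed.

Lemma dotvC u v : dotv u v = dotv v u.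
Proof. by rewrite !dotvE; apply: eq_bigr => k _; rewrite mulrC. Qed.

Lemma dotvDl u v w : dotv (u + v) w = dotv u w + dotv v w.
Proof. by rewrite !dotvE -big_split; apply: eq_bigr => k _; rewrite mxE mulrDl. Qed.

Lemma dotvZl a u w : dotv (a *: u) w = a * dotv u w.
Proof. by rewrite !dotvE mulr_sumr; apply: eq_bigr => k _; rewrite mxE mulrA. Qed.

Lemma dotvBl u v w : dotv (u - v) w = dotv u w - dotv v w.
Proof. by rewrite dotvDl -scaleN1r dotvZl mulN1r. Qed.

Lemma dotvDr u v w : dotv w (u + v) = dotv w u + dotv w v.
Proof. by rewrite dotvC dotvDl !(dotvC w). Qed.

Lemma dotvZr a u w : dotv w (a *: u) = a * dotv w u.
Proof. by rewrite dotvC dotvZl dotvC. Qed.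

Lemma dotvBr u v w : dotv w (u - v) = dotv w u - dotv w v.
Proof. by rewrite dotvC dotvBl !(dotvC w). Qed.

Lemma dot0v u : dotv 0 u = 0.
Proof. by rewrite -(scale0r 0) dotvZl mul0r. Qed.

Lemma dotv0 u : dotv u 0 = 0.
Proof. by rewrite dotvC dot0v. Qed.

Lemma dotvv_ge0 u : 0 <= dotv u u.
Proof. by rewrite dotvE sumr_ge0 // => k _; rewrite -expr2 sqr_ge0. Qed.

Lemma dotvv_eq0 u : dotv u u = 0 -> u = 0.
Proof.
rewrite dotvE => /eqP; rewrite psumr_eq0 => [/allP u0|k _]; last first.
  by rewrite -expr2 sqr_ge0.
apply/rowP => k; have := u0 k (mem_index_enum _).
by rewrite implyTb mulf_eq0 orbb mxE => /eqP.
Qed.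

Lemma dotvv_gt0 u : u != 0 -> 0 < dotv u u.
Proof. by move=> u0; rewrite lt_def dotvv_ge0 andbT; apply: contraNneq u0 => /dotvv_eq0->. Qed.

Lemma dotv_cauchy_schwarz u v : dotv u v ^+ 2 <= dotv u u * dotv v v.
Proof.
have [->|v0] := eqVneq v 0; first by rewrite !dotv0 mulr0 expr0n.
have := dotvv_ge0 (dotv v v *: u - dotv u v *: v).
rewrite !(dotvBl, dotvBr, dotvZl, dotvZr) (dotvC v u) => ge0.
have : 0 <= dotv v v * (dotv u u * dotv v v - dotv u v ^+ 2).
  by move: ge0; congr (_ <= _); ring.
by rewrite pmulr_rge0 ?dotvv_gt0 // subr_ge0.
Qed.

Lemma dotvv_sub_component z u : u = 0 \/ dotv u u = 1 ->
  dotv (z - dotv z u *: u) (z - dotv z u *: u) = dotv z z - dotv z u ^+ 2.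
Proof.
case=> [->|uu1]; first by rewrite dotv0 scale0r subr0 expr0n subr0.
by rewrite !(dotvBl, dotvBr, dotvZl, dotvZr) uu1 (dotvC u z); ring.
Qed.

Lemma norm2_ge0 u : 0 <= norm2 u.
Proof. exact: sqrtr_ge0. Qed.

Lemma norm2_sqr u : norm2 u ^+ 2 = dotv u u.
Proof. by rewrite sqr_sqrtr // dotvv_ge0. Qed.

Lemma ler_norm_dotv u v : `|dotv u v| <= norm2 u * norm2 v.
Proof.
rewrite -(ler_pXn2r (isT : (0 < 2)%N)) ?nnegrE ?mulr_ge0 ?norm2_ge0 //.
by rewrite real_normK ?num_real // exprMn !norm2_sqr dotv_cauchy_schwarz.
Qed.

Lemma dotv_mulmx_tr n (z : 'rV[R]_n) (A : 'M[R]_(n, d)) y :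
  dotv z (y *m A^T) = dotv (z *m A) y.
Proof. by rewrite /dotv trmx_mul trmxK mulmxA. Qed.

Lemma mulmx_tr_coord n (A : 'M[R]_(n, d)) y i : (y *m A^T) 0 i = dotv y (row i A).
Proof. by rewrite dotvE mxE; apply: eq_bigr => k _; rewrite !mxE. Qed.

Lemma row_free_gram_unit m (B : 'M[R]_(m, d)) : row_free B -> B *m B^T \in unitmx.
Proof.
move=> freeB; rewrite -row_free_unit; apply/inj_row_free => v vBB0.
apply: (row_free_inj freeB); rewrite mul0mx; apply: dotvv_eq0.
by rewrite /dotv trmx_mul mulmxA -(mulmxA v) vBB0 mul0mx mxE.
Qed.

End DotProduct.

Section OrthogonalProjection.
Variables (R : realType) (d : nat).
Implicit Types (S : 'M[R]_d) (u v x y : 'rV[R]_d).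

Lemma orthproj_sub S x : (orthproj S x <= S)%MS.
Proof.
rewrite /orthproj; have := eq_row_base S; move: (row_base S) => B eqBS.
by rewrite !mulmxA -eqBS submxMl.
Qed.

Lemma orthproj_perp S x v : (v <= S)%MS -> dotv (x - orthproj S x) v = 0.
Proof.
rewrite -(eq_row_base S) => /submxP [c ->]; rewrite /dotv /orthproj.
have := row_free_gram_unit (row_base_free S); move: (row_base S) c => B c BBunit.
by rewrite trmx_mul mulmxA mulmxBl !mulmxA -(mulmxA _ B) mulmxKV // subrr mul0mx mxE.
Qed.

Lemma orthproj_unique S x y : (y <= S)%MS ->
  (forall v, (v <= S)%MS -> dotv (x - y) v = 0) -> orthproj S x = y.
Proof.
move=> yS xy_perp; apply/eqP; rewrite -subr_eq0; apply/eqP/dotvv_eq0.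
have zS : (orthproj S x - y <= S)%MS by rewrite addmx_sub ?eqmx_opp ?orthproj_sub.
have {1}-> : orthproj S x - y = (x - y) - (x - orthproj S x).
  by rewrite opprB [RHS]addrC addrA subrK.
by rewrite dotvBl xy_perp // orthproj_perp // subrr.
Qed.

Lemma orthproj_id S v : (v <= S)%MS -> orthproj S v = v.
Proof. by move=> vS; apply: orthproj_unique => // y _; rewrite subrr dot0v. Qed.

Lemma orthprojB S x y : orthproj S (x - y) = orthproj S x - orthproj S y.
Proof. by rewrite /orthproj mulmxBl. Qed.

Lemma orthprojZ S a x : orthproj S (a *: x) = a *: orthproj S x.
Proof. by rewrite /orthproj scalemxAl. Qed.

Lemma eqmx_orthproj S1 S2 x : (S1 :=: S2)%MS -> orthproj S1 x = orthproj S2 x.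
Proof.
move=> eqS; apply: orthproj_unique; first by rewrite eqS orthproj_sub.
by move=> v; rewrite eqS; apply: orthproj_perp.
Qed.

Lemma dotv_orthproj S x v : (v <= S)%MS -> dotv x v = dotv (orthproj S x) v.
Proof. by move=> vS; rewrite -[x in LHS](subrK (orthproj S x)) dotvDl orthproj_perp ?add0r. Qed.

Lemma dotv_pythagoras S x : dotv x x =
  dotv (orthproj S x) (orthproj S x) + dotv (x - orthproj S x) (x - orthproj S x).
Proof.
have := orthproj_perp x (orthproj_sub S x); have := subrK (orthproj S x) x.
move: (orthproj S x) (x - _) => p q <- qp.
by rewrite !(dotvDl, dotvDr) qp (dotvC p q) qp addr0 add0r addrC.
Qed.

Lemma orthproj_adds_perp S q x :
  (forall v, (v <= S)%MS -> dotv q v = 0) -> q != 0 ->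
  orthproj (S + <<q>>)%MS x = orthproj S x + (dotv x q / dotv q q) *: q.
Proof.
move=> qS q0; have qq0 : dotv q q != 0 by rewrite gt_eqF ?dotvv_gt0.
set y := _ + _; apply: orthproj_unique.
  by rewrite addmx_sub_adds ?orthproj_sub // scalemx_sub // genmxE.
have xy_perpS v : (v <= S)%MS -> dotv (x - y) v = 0.
  by move=> vS; rewrite opprD addrA dotvBl orthproj_perp // dotvZl (qS v vS) mulr0 subr0.
move=> v /sub_addsmxP [[v1 v2] /= ->].
have /sub_rVP [a ->] : (v2 *m <<q>> <= q)%MS by rewrite -(genmxE q) submxMl.
rewrite dotvDr dotvZr xy_perpS ?submxMl // add0r opprD addrA dotvBl dotvZl dotvBl.
by rewrite (dotvC (orthproj S x)) qS ?orthproj_sub // subr0 mulfVK // subrr mulr0.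
Qed.

Lemma addsmx_residual S u : (S + <<u>> :=: S + <<u - orthproj S u>>)%MS.
Proof.
apply/eqmxP/andP; split; rewrite addsmx_sub addsmxSl genmxE /=.
  rewrite -{1}[u](subrK (orthproj S u)) addrC.
  by rewrite addmx_sub_adds ?genmxE ?orthproj_sub.
by rewrite addrC addmx_sub_adds ?genmxE ?eqmx_opp ?orthproj_sub.
Qed.

Lemma det_gram_col_mx p (F : 'M[R]_(p, d)) u :
  \det (col_mx F u *m (col_mx F u)^T) =
  \det (F *m F^T) * dotv (u - orthproj <<F>>%MS u) (u - orthproj <<F>>%MS u).
Proof.
have /submxP [c Pu] : (orthproj <<F>>%MS u <= F)%MS by rewrite -(genmxE F) orthproj_sub.
set q := u - _ in Pu *.
have Fq : F *m q^T = 0.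
  apply/matrixP => i j; have qFi : dotv q (row i F) = 0.
    by rewrite orthproj_perp // genmxE row_sub.
  rewrite (ord1 j) [RHS]mxE -qFi dotvC dotvE mxE.
  by apply: eq_bigr => k _; rewrite !mxE.
have qF : q *m F^T = 0 by rewrite -[LHS]trmxK trmx_mul trmxK Fq trmx0.
(* Subtracting from u its projection c *m F is a unimodular row operation
   that makes the Gram matrix block diagonal. *)
have -> : col_mx F u = block_mx 1%:M 0 c 1%:M *m col_mx F q.
  by rewrite mul_block_col !mul1mx mul0mx addr0 -Pu /q addrC subrK.
rewrite trmx_mul !mulmxA -(mulmxA _ (col_mx F q)) !det_mulmx det_tr det_lblock.
rewrite !det1 mulr1 !mul1r tr_col_mx mul_col_row Fq qF det_ublock det_mx11.
by rewrite mulr1.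
Qed.

Lemma det_gram_castmx p1 p2 (e : p1 = p2) (F : 'M[R]_(p1, d)) :
  \det (castmx (e, erefl d) F *m (castmx (e, erefl d) F)^T) = \det (F *m F^T).
Proof. by case: p2 / e; rewrite castmx_id. Qed.

End OrthogonalProjection.

(* The scalar core of the induction step of Meany's inequality. *)
Lemma meany_quadratic_ge0 (R : realFieldType) (c X a t : R) :
  0 <= c <= 1 -> 0 <= X -> a ^+ 2 <= (1 - c) * X ->
  0 <= c * X + (a + t) ^+ 2 - c * t ^+ 2.
Proof.
move=> /andP [c0 c1] X0 aX.
have : 0 <= (1 - c) * (c * X + (a + t) ^+ 2 - c * t ^+ 2).
  have -> : (1 - c) * (c * X + (a + t) ^+ 2 - c * t ^+ 2) =
    ((1 - c) * t + a) ^+ 2 + c * ((1 - c) * X - a ^+ 2) by ring.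
  by rewrite addr_ge0 ?sqr_ge0 ?mulr_ge0 ?subr_ge0.
have [c_lt1 | c_ge1] := ltP c 1; first by rewrite pmulr_rge0 ?subr_gt0.
have c_eq1 : c = 1 by apply: le_anti; rewrite c1 c_ge1.
have a0 : a = 0.
  by apply/eqP; rewrite -sqrf_eq0 eq_le sqr_ge0 andbT; rewrite c_eq1 subrr mul0r in aX.
by rewrite c_eq1 a0 add0r !mul1r addrK.
Qed.

Lemma map_enum_setU1_max m (J : {set 'I_m}) (k : 'I_m) :
  (forall j, j \in J -> (j < k)%N) ->
  [seq nat_of_ord j | j <- enum (k |: J)] = rcons [seq nat_of_ord j | j <- enum J] k.
Proof.
move=> J_lt_k.
have sorted_enum (B : {set 'I_m}) : sorted ltn [seq nat_of_ord j | j <- enum B].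
  rewrite sorted_map /enum_mem -enumT.
  apply: sorted_filter; first exact: ltn_trans.
  by rewrite -sorted_map val_enum_ord iota_ltn_sorted.
apply: (irr_sorted_eq ltn_trans ltnn) => //.
  rewrite sorted_pairwise; last exact: ltn_trans.
  rewrite pairwise_rcons -sorted_pairwise; last exact: ltn_trans.
  rewrite sorted_enum andbT; apply/allP => i /mapP [j]; rewrite mem_enum => jJ ->.
  exact: J_lt_k.
move=> x; case: (ltnP x m) => [x_lt | x_ge].
  have -> : x = val (Ordinal x_lt) by [].
  by rewrite mem_rcons in_cons !(mem_map val_inj) !mem_enum in_setU1 val_eqE.
have notin (B : {set 'I_m}) : x \notin [seq nat_of_ord j | j <- enum B].
  by apply/mapP => [[j _ xj]]; move: (ltn_ord j); rewrite -xj ltnNge x_ge.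
rewrite mem_rcons in_cons !(negbTE (notin _)) orbF.
by apply/esym/negbTE; rewrite neq_ltn (leq_trans (ltn_ord k) x_ge) orbT.
Qed.

Section Meany.
Variables (R : realType) (d : nat) (U : nat -> 'rV[R]_d).
Hypothesis U_unit : forall k, U k = 0 \/ dotv (U k) (U k) = 1.
Variables (s m : nat).

Local Notation nrm x := (dotv x x).

Fixpoint sweep (x : 'rV[R]_d) k :=
  if k is k'.+1 then sweep x k' - dotv (sweep x k') (U (s + k')) *: U (s + k') else x.

Definition spanU k : 'M[R]_d := (\sum_(0 <= i < k) <<U (s + i)>>)%MS.

Definition fresh k : bool := ~~ (U (s + k) <= spanU k)%MS.

Definition residual k := U (s + k) - orthproj (spanU k) (U (s + k)).

(* The greedy maximal linearly independent subfamily of u_s, ..., u_{s+k-1};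
   [gram_fresh k] is det(F'F) for the matrix F whose columns it forms. *)
Definition fresh_set k : {set 'I_m} := [set j : 'I_m | (j < k)%N && fresh j].

Definition rowsmx (J : {set 'I_m}) : 'M[R]_(size (enum J), d) :=
  \matrix_(i < size (enum J), c < d)
     U (s + nth 0%N [seq nat_of_ord j | j <- enum J] i) 0 c.

Definition gram_fresh k :=
  \det (rowsmx (fresh_set k) *m (rowsmx (fresh_set k))^T).

Lemma rowsmx_eqmx J : (rowsmx J :=: \sum_(j in J) <<U (s + j)>>)%MS.
Proof.
apply/eqmxP/andP; split.
  apply/row_subP => i.
  have i_lt : (i < size [seq nat_of_ord j | j <- enum J])%N by rewrite size_map.
  have /mapP [j jJ ij] := mem_nth 0%N i_lt.
  have -> : row i (rowsmx J) = U (s + j) by apply/rowP => c; rewrite !mxE ij.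
  by apply: (sumsmx_sup j); [rewrite -mem_enum | rewrite genmxE].
apply/sumsmx_subP => j jJ; rewrite genmxE.
have j_in : val j \in [seq nat_of_ord j | j <- enum J] by rewrite (mem_map val_inj) mem_enum.
have i_lt : (index (val j) [seq nat_of_ord j | j <- enum J] < size (enum J))%N.
  by rewrite -(size_map val) index_mem.
by apply: (eq_row_sub (Ordinal i_lt)); apply/rowP => c; rewrite !mxE /= nth_index.
Qed.

Lemma spanU0 : spanU 0 = 0.
Proof. by rewrite /spanU big_geq. Qed.

Lemma spanUS k : spanU k.+1 = (spanU k + <<U (s + k)>>)%MS.
Proof. by rewrite /spanU big_nat_recr. Qed.

Lemma spanU_monotone j k : (j <= k)%N -> (spanU j <= spanU k)%MS.
Proof. by move=> jk; rewrite /spanU (big_cat_nat (leq0n j) jk) addsmxSl. Qed.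

Lemma fresh_set0 : fresh_set 0 = finset.set0.
Proof. by apply/setP => j; rewrite !inE ltn0. Qed.

Lemma fresh_setS k (k_lt : (k < m)%N) :
  fresh_set k.+1 = if fresh k then Ordinal k_lt |: fresh_set k else fresh_set k.
Proof.
apply/setP => j; rewrite !inE ltnS leq_eqVlt.
have [jk | jk] /= := eqVneq (nat_of_ord j) k.
  have -> : j = Ordinal k_lt by apply: val_inj.
  by case: ifP => fk; rewrite ?inE ?eqxx ?ltnn /= ?fk.
have jK : (j == Ordinal k_lt) = false by apply/negbTE; rewrite -val_eqE.
by case: ifP => _; rewrite ?inE ?jK.
Qed.

Lemma rowsmx_fresh_set k : (k <= m)%N -> (rowsmx (fresh_set k) :=: spanU k)%MS.
Proof.
move=> k_le; apply: eqmx_trans (rowsmx_eqmx _) _.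
elim: k k_le => [_|k IH k_lt]; first by rewrite fresh_set0 big_set0 spanU0.
rewrite (fresh_setS k_lt) spanUS; case fk: (fresh k).
  rewrite big_setU1 /= ?inE ?ltnn // addsmxC.
  exact: adds_eqmx (IH (ltnW k_lt)) (eqmx_refl _).
have uS : (<<U (s + k)>> <= spanU k)%MS by rewrite genmxE; move/negbFE: fk.
by apply: eqmx_trans (IH (ltnW k_lt)) _; apply/eqmx_sym/addsmx_idPl.
Qed.

Lemma gram_fresh0 : gram_fresh 0 = 1.
Proof.
rewrite /gram_fresh; move: (rowsmx _); rewrite fresh_set0 -cardE cards0 => F.
exact: det_mx00.
Qed.

Lemma gram_freshS k : (k < m)%N ->
  gram_fresh k.+1 = if fresh k then gram_fresh k * nrm (residual k) else gram_fresh k.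
Proof.
move=> k_lt; rewrite /gram_fresh (fresh_setS k_lt); case: ifP => // fk.
set G := fresh_set k; set K := Ordinal k_lt.
have G_lt j : j \in G -> (j < K)%N by rewrite inE => /andP [].
have enumKG := map_enum_setU1_max G_lt.
have e : (size (enum G) + 1 = size (enum (K |: G)))%N.
  by rewrite -(size_map (@nat_of_ord m) (enum (K |: G))) enumKG size_rcons size_map addn1.
have -> : rowsmx (K |: G) = castmx (e, erefl d) (col_mx (rowsmx G) (U (s + k))).
  apply/matrixP => i c; rewrite castmxE mxE /= !mxE.
  case: splitP => [i1 /= i1E | i2 /= i2E]; rewrite enumKG nth_rcons size_map.
    by rewrite i1E ltn_ord mxE cast_ord_id.
  by rewrite (ord1 i2) /= addn0 in i2E; rewrite i2E ltnn eqxx cast_ord_id (ord1 i2).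
rewrite det_gram_castmx det_gram_col_mx /residual.
by rewrite (eqmx_orthproj _ (eqmx_trans (genmxE _) (rowsmx_fresh_set (ltnW k_lt)))).
Qed.

Lemma residual_neq0 k : fresh k -> residual k != 0.
Proof.
apply: contra => /eqP res0.
rewrite -[U (s + k)](subrK (orthproj (spanU k) (U (s + k)))) -/(residual k).
by rewrite res0 add0r orthproj_sub.
Qed.

Lemma fresh_unit k : fresh k -> nrm (U (s + k)) = 1.
Proof. by case: (U_unit (s + k)) => // u0; rewrite /fresh u0 sub0mx. Qed.

Lemma residual_bounds k : fresh k -> 0 < nrm (residual k) <= 1.
Proof.
move=> fk; rewrite dotvv_gt0 ?residual_neq0 //=.
have := dotv_pythagoras (spanU k) (U (s + k)); rewrite fresh_unit // -/(residual k).
by have := dotvv_ge0 (orthproj (spanU k) (U (s + k))); lra.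
Qed.

Lemma gram_fresh_bounds k : (k <= m)%N -> 0 < gram_fresh k <= 1.
Proof.
elim: k => [_|k IH k_lt]; first by rewrite gram_fresh0 ltr01 lexx.
rewrite gram_freshS //; case: ifP => fk; last exact: IH (ltnW k_lt).
have /andP [c0 c1] := IH (ltnW k_lt); have /andP [r0 r1] := residual_bounds fk.
by rewrite mulr_gt0 //= mulr_ile1 // ltW.
Qed.

Lemma sweep_sub x k : (x - sweep x k <= spanU k)%MS.
Proof.
elim: k => [|k IH] /=; first by rewrite subrr sub0mx.
rewrite spanUS opprB addrCA addrC.
by rewrite addmx_sub_adds // scalemx_sub // genmxE.
Qed.

Lemma orthproj_spanUS k x : fresh k ->
  orthproj (spanU k.+1) x =
  orthproj (spanU k) x + (dotv x (residual k) / nrm (residual k)) *: residual k.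
Proof.
move=> fk; rewrite spanUS (eqmx_orthproj _ (addsmx_residual _ _)).
by rewrite orthproj_adds_perp ?residual_neq0 // => v; apply: orthproj_perp.
Qed.

Lemma dotv_orthproj_spanUS k x : fresh k ->
  nrm (orthproj (spanU k.+1) x) =
  nrm (orthproj (spanU k) x) + dotv x (residual k) ^+ 2 / nrm (residual k).
Proof.
move=> fk; have /andP [q0 _] := residual_bounds fk.
have qS y : (y <= spanU k)%MS -> dotv (residual k) y = 0 by apply: orthproj_perp.
rewrite orthproj_spanUS //; move: (residual k) q0 qS => q q0 qS.
rewrite dotvDl !dotvDr !dotvZl !dotvZr (dotvC (orthproj _ x) q) (qS _ (orthproj_sub _ x)).
by field; rewrite gt_eqF.
Qed.

Lemma orthproj_sweep x k :
  orthproj (spanU k) (sweep x k) = orthproj (spanU k) x - (x - sweep x k).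
Proof. by rewrite -(orthproj_id (sweep_sub x k)) -orthprojB opprB addrC subrK. Qed.

Lemma dotv_sweep_gap x k : nrm x - nrm (sweep x k) =
  nrm (orthproj (spanU k) x) - nrm (orthproj (spanU k) (sweep x k)).
Proof.
rewrite (dotv_pythagoras (spanU k) x) (dotv_pythagoras (spanU k) (sweep x k)).
have -> : sweep x k - orthproj (spanU k) (sweep x k) = x - orthproj (spanU k) x.
  by rewrite orthproj_sweep; apply/rowP => i; rewrite !mxE; ring.
by ring.
Qed.

Lemma dotv_sweep_unit x k : dotv (sweep x k) (U (s + k)) =
  dotv (orthproj (spanU k) (sweep x k)) (orthproj (spanU k) (U (s + k))) +
  dotv x (residual k).
Proof.
have xz_perp : dotv (x - sweep x k) (residual k) = 0.
  by rewrite dotvC orthproj_perp // sweep_sub.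
rewrite -[U (s + k) in LHS](subrK (orthproj (spanU k) (U (s + k)))) -/(residual k).
rewrite dotvDr addrC (dotv_orthproj _ (orthproj_sub _ _)); congr (_ + _).
by move/eqP: xz_perp; rewrite dotvBl subr_eq0 => /eqP.
Qed.

Lemma meany_fresh_step c x k : fresh k -> 0 <= c <= 1 ->
  c * nrm (orthproj (spanU k) x) <= nrm x - nrm (sweep x k) ->
  c * nrm (residual k) * nrm (orthproj (spanU k.+1) x) <= nrm x - nrm (sweep x k.+1).
Proof.
move=> fk c01 IH; rewrite dotv_orthproj_spanUS //= dotvv_sub_component // dotv_sweep_unit.
have gap := dotv_sweep_gap x k.
have nv := dotv_pythagoras (spanU k) (U (s + k)).
rewrite fresh_unit // -/(residual k) in nv.
have /andP [r0 r1] := residual_bounds fk.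
have CS := dotv_cauchy_schwarz (orthproj (spanU k) (sweep x k)) (orthproj (spanU k) (U (s + k))).
have P0 := dotvv_ge0 (orthproj (spanU k) x).
have Q0 := dotvv_ge0 (orthproj (spanU k) (sweep x k)).
move: IH gap nv r0 r1 CS P0 Q0.
move: (nrm x) (nrm (sweep x k)) (nrm (orthproj (spanU k) x)).
move: (nrm (orthproj (spanU k) (sweep x k))) (nrm (orthproj (spanU k) (U (s + k)))).
move: (dotv (orthproj (spanU k) (sweep x k)) (orthproj (spanU k) (U (s + k)))).
move: (dotv x (residual k)) (nrm (residual k)) => t r a Q v2 X Z P.
move=> IH gap nv r0 r1 CS P0 Q0.
have aX : a ^+ 2 <= (1 - c) * ((1 - r) * P).
  have -> : (1 - c) * ((1 - r) * P) = (1 - c) * P * (1 - r) by ring.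
  by apply: (le_trans CS); apply: ler_pM; lra.
have X0 : 0 <= (1 - r) * P by rewrite mulr_ge0 ?subr_ge0.
have := meany_quadratic_ge0 t c01 X0 aX.
have -> : c * r * (P + t ^+ 2 / r) = c * r * P + c * t ^+ 2 by field; rewrite gt_eqF.
lra.
Qed.

(* Meany's inequality, strengthened to an invariant that survives induction on k. *)
Lemma meany_invariant x k : (k <= m)%N ->
  gram_fresh k * nrm (orthproj (spanU k) x) <= nrm x - nrm (sweep x k).
Proof.
elim: k => [_|k IH k_lt].
  rewrite spanU0; have /eqP -> : orthproj 0 x == 0 by rewrite -submx0 orthproj_sub.
  by rewrite dot0v mulr0 subrr.
have c01 : 0 <= gram_fresh k <= 1.
  by have /andP [c0 c1] := gram_fresh_bounds (ltnW k_lt); rewrite ltW.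
rewrite gram_freshS //; case: ifP => fk; first exact: meany_fresh_step (IH (ltnW k_lt)).
have -> : orthproj (spanU k.+1) x = orthproj (spanU k) x.
  by apply: eqmx_orthproj; rewrite spanUS; apply/addsmx_idPl; rewrite genmxE; apply/negbFE.
rewrite /= dotvv_sub_component //; have := IH (ltnW k_lt).
by have := sqr_ge0 (dotv (sweep x k) (U (s + k))); lra.
Qed.

Lemma meany_sweep x : (x <= spanU m)%MS ->
  nrm (sweep x m) <= (1 - gram_fresh m) * nrm x.
Proof. by move=> xS; have := meany_invariant x (leqnn m); rewrite orthproj_id //; lra. Qed.

Lemma fresh_set_maxindep : row_free (rowsmx (fresh_set m)) &&
  [forall j : 'I_m, (j \notin fresh_set m) ==> ~~ row_free (rowsmx (j |: fresh_set m))].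
Proof.
set G := fresh_set m; apply/andP; split.
  have /andP [c0 _] := gram_fresh_bounds (leqnn m).
  apply/inj_row_free => y yG0.
  have Gunit : rowsmx G *m (rowsmx G)^T \in unitmx by rewrite unitmxE unitfE gt_eqF.
  by rewrite -(mulmxK Gunit y) mulmxA yG0 !mul0mx.
apply/forallP => j; apply/implyP => jG.
have uG : (U (s + j) <= rowsmx G)%MS.
  have : ~~ fresh j by move: jG; rewrite inE ltn_ord.
  rewrite negbK rowsmx_fresh_set // => /submx_trans; apply.
  exact: spanU_monotone (ltnW (ltn_ord j)).
have jGG : (rowsmx (j |: G) <= rowsmx G)%MS.
  rewrite rowsmx_eqmx; apply/sumsmx_subP => i; rewrite in_setU1 => /orP [/eqP -> | iG].
    by rewrite genmxE.
  by rewrite rowsmx_eqmx (sumsmx_sup i iG).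
apply/negP => /eqP rank_jG; have := mxrankS jGG; rewrite rank_jG.
rewrite -!cardE cardsU1 jG => /leq_trans /(_ (rank_leq_row _)).
by rewrite -cardE ltnn.
Qed.

End Meany.

Section Limits.
Variables (R : realType) (d : nat).

Lemma cvg0_dotv_coord (u : nat -> 'rV[R]_d) c :
  (forall i, (fun k => u k 0 i) @ \oo --> 0) -> (fun k => dotv c (u k)) @ \oo --> 0.
Proof.
move=> u0; have sum0 : \sum_(i < d) c 0 i * 0 = 0 :> R by rewrite big1 // => i _; rewrite mulr0.
rewrite -sum0 (eq_cvg _ _ (fun k => dotvE c (u k))).
by apply: (cvg_big add_continuous) => i _; apply: cvgMl_tmp.
Qed.

Lemma cvg0_dotv_norm (u : nat -> 'rV[R]_d) v :
  (fun k => dotv (u k) (u k)) @ \oo --> 0 -> (fun k => dotv (u k) v) @ \oo --> 0.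
Proof.
move=> uu0; have u0 : (fun k => norm2 (u k)) @ \oo --> 0.
  by rewrite -sqrtr0; apply: continuous_cvg uu0; exact: sqrt_continuous.
apply: (@squeeze_cvgr _ _ _ _ (fun k => - (norm2 (u k) * norm2 v))
                              (fun k => norm2 (u k) * norm2 v)).
- by near=> k; rewrite -ler_norml ler_norm_dotv.
- by rewrite -oppr0 -(mul0r (norm2 v)); apply: cvgN; apply: cvgMr_tmp.
- by rewrite -(mul0r (norm2 v)); apply: cvgMr_tmp.
Unshelve. all: by end_near.
Qed.

Lemma nonincreasing_cvg0 (f g : nat -> R) (t : nat -> nat) :
  (forall j k, (j <= k)%N -> f k <= f j) -> (forall k, 0 <= f k) ->
  (forall N, f (t N) <= g N) -> g @ \oo --> 0 -> f @ \oo --> 0.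
Proof.
move=> f_noninc f_ge0 fg g0; apply/cvgrPdist_lt => e e0.
have /cvgrPdist_lt/(_ e e0) [N _ gN] := g0.
exists (t N) => // k tN_le_k.
rewrite sub0r normrN ger0_norm //; apply: le_lt_trans (f_noninc _ _ tN_le_k) _.
apply: le_lt_trans (fg N) (le_lt_trans (ler_norm _) _).
by have := gN N (leqnn N); rewrite sub0r normrN.
Qed.

End Limits.

Lemma sumsmx_nat_sup (R : fieldType) d (F : nat -> 'M[R]_d) a k b :
  (a <= k < b)%N -> (F k <= \sum_(a <= j < b) F j)%MS.
Proof.
move=> /andP [ak kb]; rewrite (big_cat_nat ak (ltnW kb)) /=.
by apply: submx_trans (addsmxSr _ _); rewrite big_ltn // addsmxSl.
Qed.

Lemma foldr_min_le (R : realDomainType) (h : R) (s : seq R) x :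
  x \in s -> foldr Num.min h s <= x.
Proof.
elim: s => [//|a s IH] /=; rewrite in_cons ge_min => /orP [/eqP -> | /IH ->].
  by rewrite lexx.
by rewrite orbT.
Qed.

Section KaczmarzStep.
Variables (R : realType) (n d : nat) (A : 'M[R]_(n, d)) (W : nat -> 'rV[R]_n).

(* A'w_k = 0 is harmless: then u_k = 0 and the step leaves x_k unchanged. *)
Lemma unitA_unit k : unitA A W k = 0 \/ dotv (unitA A W k) (unitA A W k) = 1.
Proof.
rewrite /unitA; have [->|a0] := eqVneq (W k *m A) 0; first by left; rewrite scaler0.
right; rewrite dotvZl dotvZr mulrA -invfM -expr2 norm2_sqr mulVf //.
by rewrite gt_eqF ?dotvv_gt0.
Qed.

Lemma genmx_unitA k : <<unitA A W k>>%MS = <<W k *m A>>%MS.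
Proof.
rewrite /unitA; have [->|a0] := eqVneq (W k *m A) 0; first by rewrite scaler0.
apply/eq_genmx/eqmx_scale; rewrite invr_neq0 // /norm2 gt_eqF //.
by rewrite sqrtr_gt0 dotvv_gt0.
Qed.

Lemma kacz_error_step b xstar x0 k : xstar *m A^T = b ->
  kacz A b W x0 k.+1 - xstar = (kacz A b W x0 k - xstar) -
    dotv (kacz A b W x0 k - xstar) (unitA A W k) *: unitA A W k.
Proof.
move=> xb /=; set x := kacz A b W x0 k; rewrite /unitA; set a := W k *m A.
have -> : dotv (W k) (b - x *m A^T) = - dotv (x - xstar) a.
  by rewrite -xb -mulmxBl dotv_mulmx_tr dotvC -opprB -scaleN1r dotvZl mulN1r.
rewrite dotvZr scalerA.
have -> : (norm2 a)^-1 * dotv (x - xstar) a * (norm2 a)^-1 = dotv (x - xstar) a / dotv a a.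
  by rewrite -norm2_sqr invfM; ring.
by rewrite mulNr scaleNr addrAC.
Qed.

End KaczmarzStep.

Section BlockGamma.
Variables (R : realType) (n d : nat) (A : 'M[R]_(n, d)) (W : nat -> 'rV[R]_n).
Variable tau : nat -> nat.

Local Notation bs := (blockstart tau).
Local Notation u := (unitA A W).

(* [fresh_set] is one of the families over which [mingram] minimises. *)
Lemma gammaK_ge l :
  1 - gram_fresh u (bs l) (tau l.+1 - bs l).+1 (tau l.+1 - bs l).+1 <= gammaK A W tau l.+1.
Proof.
rewrite /gammaK /= lerD2l lerN2 /mingram; apply: foldr_min_le; apply/mapP.
exists (fresh_set u (bs l) (tau l.+1 - bs l).+1 (tau l.+1 - bs l).+1) => //.
by rewrite mem_enum inE; exact: (fresh_set_maxindep (unitA_unit A W)).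
Qed.

Lemma gammaK_ge0 l : 0 <= gammaK A W tau l.+1.
Proof.
apply: le_trans (gammaK_ge l); rewrite subr_ge0.
by have /andP [] := gram_fresh_bounds (unitA_unit A W) (bs l) (leqnn (tau l.+1 - bs l).+1).
Qed.

End BlockGamma.

Section StoppingTimes.
Variables (R : realType) (n d : nat) (A : 'M[R]_(n, d)) (W : nat -> 'rV[R]_n).
Variables (Rm : 'M[R]_d) (tau : nat -> nat).
Hypothesis tauW : is_tau_seq A W Rm tau.

Local Notation bs := (blockstart tau).
Local Notation u := (unitA A W).

Lemma blockstart_le l : (bs l <= tau l.+1)%N.
Proof. by case: tauW => _ /(_ l) []. Qed.

Lemma span_block l : (spanmx A W (bs l) (tau l.+1) == Rm)%MS.
Proof. by case: tauW => _ /(_ l) []. Qed.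

Lemma leq_blockstart l : (l <= bs l)%N.
Proof. by elim: l => [//|l IH]; rewrite /= ltnS (leq_trans IH (blockstart_le l)). Qed.

Lemma unitA_sub k : (u k <= Rm)%MS.
Proof.
have k_in l : (bs l <= k <= tau l.+1)%N -> (u k <= Rm)%MS.
  move=> kl; have /andP [spanR _] := span_block l.
  by apply: submx_trans spanR; rewrite -genmxE genmx_unitA sumsmx_nat_sup.
suff below l : (k < bs l)%N -> (u k <= Rm)%MS.
  by apply: (below k.+1); rewrite /= ltnS (leq_trans (leq_blockstart k)) ?blockstart_le.
elim: l => [//|l IH]; rewrite /= ltnS => k_le.
by have [/IH | k_ge] := ltnP k (bs l); last by apply: (k_in l); rewrite k_ge.
Qed.

Lemma span_block_spanU l : (Rm <= spanU u (bs l) (tau l.+1 - bs l).+1)%MS.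
Proof.
have -> : spanU u (bs l) (tau l.+1 - bs l).+1 = spanmx A W (bs l) (tau l.+1).
  symmetry; rewrite /spanmx -{1}[bs l]add0n big_addn subSn ?blockstart_le //.
  by apply: eq_bigr => i _; rewrite addnC genmx_unitA.
by case/andP: (span_block l).
Qed.

End StoppingTimes.

Section KaczmarzError.
Variables (R : realType) (n d : nat) (A : 'M[R]_(n, d)) (W : nat -> 'rV[R]_n).
Variables (Rm : 'M[R]_d) (tau : nat -> nat) (b : 'rV[R]_n) (xstar x0 : 'rV[R]_d).
Hypothesis tauW : is_tau_seq A W Rm tau.
Hypothesis xstar_sol : xstar *m A^T = b.

Local Notation bs := (blockstart tau).
Local Notation u := (unitA A W).
Local Notation nrm x := (dotv x x).
Local Notation err k := (kacz A b W x0 k - xstar).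
Local Notation errR k := (orthproj Rm (err k)).

Lemma errR_step k : errR k.+1 = errR k - dotv (errR k) (u k) *: u k.
Proof.
rewrite kacz_error_step // [LHS]orthprojB orthprojZ (orthproj_id (unitA_sub tauW k)).
by rewrite (dotv_orthproj (err k) (unitA_sub tauW k)).
Qed.

Lemma errR_nonincreasing j k : (j <= k)%N -> nrm (errR k) <= nrm (errR j).
Proof.
move=> /subnK <-; elim: (k - j)%N => [//|i IH].
rewrite addSn errR_step dotvv_sub_component; last exact: unitA_unit.
by apply: le_trans IH; rewrite lerBlDr lerDl sqr_ge0.
Qed.

Lemma errR_block l :
  nrm (errR (bs l.+1)) <= gammaK A W tau l.+1 * nrm (errR (bs l)).
Proof.
set s := bs l; set m := (tau l.+1 - s).+1.
have sweepE j : sweep u s (errR s) j = errR (s + j).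
  by elim: j => [|j IH] /=; rewrite ?addn0 // IH addnS errR_step.
have errR_span : (errR s <= spanU u s m)%MS.
  exact: submx_trans (orthproj_sub _ _) (span_block_spanU tauW l).
have := meany_sweep (unitA_unit A W) errR_span.
rewrite sweepE /m addnS subnKC; last exact: blockstart_le tauW l.
move=> /le_trans; apply; apply: ler_wpM2r; [exact: dotvv_ge0 | exact: gammaK_ge].
Qed.

Lemma errR_prod L :
  nrm (errR (bs L)) <= (\prod_(1 <= j < L.+1) gammaK A W tau j) * nrm (errR 0).
Proof.
elim: L => [|L IH]; first by rewrite big_geq // mul1r.
rewrite big_nat_recr //= [_ * gammaK _ _ _ _]mulrC -mulrA.
exact: le_trans (errR_block L) (ler_wpM2l (gammaK_ge0 A W tau L) IH).
Qed.

Lemma errR_cvg0 :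
  (fun l => \prod_(1 <= j < l.+1) gammaK A W tau j) @ \oo --> 0 ->
  (fun k => nrm (errR k)) @ \oo --> 0.
Proof.
move=> prod0; apply: (nonincreasing_cvg0 errR_nonincreasing _ errR_prod) => [k|].
  exact: dotvv_ge0.
by rewrite -(mul0r (nrm (errR 0))); apply: cvgMr_tmp.
Qed.

End KaczmarzError.

Section Convergence.
Variables (R : realType) (n d : nat) (A : 'M[R]_(n, d)) (W : nat -> 'rV[R]_n).
Variables (Rm Vm : 'M[R]_d) (tau : nat -> nat) (b : 'rV[R]_n) (xstar x0 : 'rV[R]_d).
Hypothesis tauW : is_tau_seq A W Rm tau.
Hypothesis xstar_sol : xstar *m A^T = b.
Hypothesis VR_perp : forall u v, (u <= Vm)%MS -> (v <= Rm)%MS -> dotv u v = 0.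
Hypothesis VR_row : (Vm + Rm == A)%MS.
Hypothesis gamma_prod0 :
  (fun l => \prod_(1 <= j < l.+1) gammaK A W tau j) @ \oo --> 0.

Local Notation x k := (kacz A b W x0 k).
Local Notation err k := (x k - xstar).

Lemma errV_invariant v k : (v <= Vm)%MS -> dotv (err k) v = dotv (err 0) v.
Proof.
move=> vV; elim: k => [//|k IH].
rewrite kacz_error_step // (dotvBl (err k)) dotvZl IH (dotvC (unitA A W k)).
by rewrite (VR_perp vV (unitA_sub tauW k)) mulr0 subr0.
Qed.

Lemma kacz_residual_coord k i : (err k *m A^T) 0 i = (x k *m A^T) 0 i - b 0 i.
Proof. by rewrite mulmxBl xstar_sol !mxE. Qed.

Lemma kacz_cvg_orthprojV :
  (forall i, (fun k => (x k *m A^T) 0 i) @ \oo --> b 0 i) ->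
  orthproj Vm x0 = orthproj Vm xstar.
Proof.
move=> cvg_b; apply/eqP; rewrite -subr_eq0 -orthprojB; apply/eqP.
set v := orthproj Vm (err 0); have vV : (v <= Vm)%MS := orthproj_sub _ _.
have /submxP [c vE] : (v <= A)%MS.
  by apply: submx_trans vV (submx_trans (addsmxSl _ Rm) _); case/andP: VR_row.
have vv_const k : dotv c (err k *m A^T) = dotv v v.
  by rewrite dotv_mulmx_tr -vE dotvC errV_invariant // (dotv_orthproj _ vV).
have : (fun k => dotv c (err k *m A^T)) @ \oo --> 0.
  apply: cvg0_dotv_coord => i.
  rewrite (eq_cvg \oo (nbhs (0:R)) (kacz_residual_coord ^~ i)) -(subrr (b 0 i)).
  exact: cvgB (cvg_b i) (cvg_cst _).
rewrite (eq_cvg \oo (nbhs (0:R)) vv_const) => vv0.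
by apply: dotvv_eq0; rewrite -(cvg_lim _ vv0) ?lim_cst.
Qed.

Lemma orthprojV_kacz_cvg : orthproj Vm x0 = orthproj Vm xstar ->
  forall i, (fun k => (x k *m A^T) 0 i) @ \oo --> b 0 i.
Proof.
move=> PV i.
have /sub_addsmxP [[p1 p2] /= rowE] : (row i A <= Vm + Rm)%MS.
  by apply: submx_trans (row_sub i A) _; case/andP: VR_row.
have coordE k : (x k *m A^T) 0 i = b 0 i + dotv (orthproj Rm (err k)) (p2 *m Rm).
  rewrite -[LHS](subrK (b 0 i)) -kacz_residual_coord addrC; congr (_ + _).
  rewrite mulmx_tr_coord rowE dotvDr errV_invariant ?submxMl //.
  rewrite (dotv_orthproj (err 0) (submxMl p1 Vm)) orthprojB PV subrr dot0v add0r.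
  exact: dotv_orthproj (submxMl _ _).
rewrite (eq_cvg \oo (nbhs (b 0 i)) coordE) -{2}(addr0 (b 0 i)).
apply: cvgD; first exact: cvg_cst.
exact: cvg0_dotv_norm (errR_cvg0 x0 tauW xstar_sol gamma_prod0).
Qed.

End Convergence.

Theorem mainTheorem11 (R : realType) (dT : measure_display) (T : measurableType dT)
  (P : probability T R) (n d : nat) (A : 'M[R]_(n, d)) (b : 'rV[R]_n)
  (xstar : 'rV[R]_d) (w : T -> 'rV[R]_n) (ws : nat -> T -> 'rV[R]_n)
  (Rm Vm : 'M[R]_d) (x0 : 'rV[R]_d) :
  xstar *m A^T = b ->
  (forall i, measurable_fun setT (fun om => w om 0 i)) ->
  (forall l i, measurable_fun setT (fun om => ws l om 0 i)) ->
  (* R(w) = N(w)^perp, N(w) = span {z | P[z'A'w = 0] = 1} *)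
  (forall v : 'rV[R]_d, (v <= Rm)%MS <->
     (forall z : 'rV[R]_d,
        P [set om | dotv z (w om *m A) = 0] = 1%E -> dotv v z = 0)) ->
  (* V(w) perp R(w) and V(w) (+) R(w) = row(A) *)
  (forall u v : 'rV[R]_d, (u <= Vm)%MS -> (v <= Rm)%MS -> dotv u v = 0) ->
  mxdirect (Vm + Rm) -> (Vm + Rm == A)%MS ->
  (forall l, P [set om | (ws l om *m A <= Rm)%MS] = 1%E) ->
  (* the iteration presupposes A'w_k <> 0 *)
  (forall l, P [set om | ws l om *m A != 0] = 1%E) ->
  exists N : set T, [/\ measurable N, P N = 0%E &
    forall om, ~ N om ->
      forall tau : nat -> nat,
        is_tau_seq A (fun k => ws k om) Rm tau ->
        (fun l => \prod_(1 <= j < l.+1) gammaK A (fun k => ws k om) tau j)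
           @ \oo --> (0 : R) ->
        ((forall i, (fun k => (kacz A b (fun k => ws k om) x0 k *m A^T) 0 i)
                      @ \oo --> b 0 i)
         <-> orthproj Vm x0 = orthproj Vm xstar)].
Proof.
move=> xstar_sol _ _ _ VR_perp _ VR_row _ _.
exists set0; split; [exact: measurable0 | exact: measure0 |].
move=> om _ tau tauW gamma_prod0.
split; first exact: kacz_cvg_orthprojV tauW xstar_sol VR_perp VR_row.
exact: orthprojV_kacz_cvg tauW xstar_sol VR_perp VR_row gamma_prod0.
Qed.
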